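(* Let $A\in\mathbb{R}^{n\times n}$, $B=I$, $m,c_0\in\mathbb{R}^n$, $r>0$, $r_0>0$. Let $p_1,\dots,p_N$ be the generating unit vectors of a $\tfrac{\sqrt3}{2}$-SVP, with maximum alignment $\eta=\max_{i\ne j}\langle p_i,p_j\rangle$, and set $D=\max_{1\le k\le N}\|A^{k+1}-I\|_2$. Suppose \[ r_0\le\frac{r(1-\eta)}{D(3-\eta)} \] and $x_0\in\mathcal{B}(m,r)\cap\mathcal{B}(c_0,r_0)$. Let $u_0\in\mathbb{R}^n$ be arbitrary and define recursively, for $i=1,\dots,N$, \[ u_i=\big(r-\|A^{i+1}-I\|_2\,r_0\big)p_i-(A^{i+1}-I)c_0-\sum_{j=0}^{i-1}A^{i-j}u_j , \] and let $x_{k+1}=Ax_k+u_k$. Then there exists $i\in\{1,\dots,N\}$ with $x_{i+1}\in\mathcal{B}(m,r)$.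
   Context: $\|\cdot\|_2$ denotes the Euclidean norm and the induced operator norm; $\mathcal{B}(x,r)$ is the closed Euclidean ball; $\mathbb{S}^{n-1}$ the unit sphere. A $\tfrac{\sqrt3}{2}$-SVP is generated by unit vectors $p_1,\dots,p_N\in\mathbb{S}^{n-1}$ such that the open caps $C(p_i,\tfrac{\sqrt3}{2})=\{w\in\mathbb{S}^{n-1}:\langle p_i,w\rangle>\tfrac{\sqrt3}{2}\}$ cover $\mathbb{S}^{n-1}$, with $N$ the smallest integer for which such a covering exists (necessarily $N\ge2$). The corresponding spherical Voronoi partition of a sphere $\partial\mathcal{B}(c,\rho)$ has cells $R_i=\{x:\|x-c\|=\rho,\ \langle x-c,p_i\rangle\ge\langle x-c,p_j\rangle\ \forall j\ne i\}$. *)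

From HB Require Import structures.
From mathcomp Require Import all_boot all_order all_algebra.
From mathcomp Require Import boolp classical_sets reals.
Set Implicit Arguments. Unset Strict Implicit. Unset Printing Implicit Defensive.
Import Order.TTheory GRing.Theory Num.Theory.
Local Open Scope ring_scope.

Section Defs.
Variable R : realType.

Definition enorm (n : nat) (x : 'cV[R]_n) : R := Num.sqrt (\sum_(i < n) x i 0 ^+ 2).

Definition dot (n : nat) (x y : 'cV[R]_n) : R := \sum_(i < n) x i 0 * y i 0.

Definition opnorm (n : nat) (A : 'M[R]_n) : R :=
  sup [set enorm (A *m x) | x in [set x : 'cV[R]_n | enorm x <= 1]]%classic.

Definition cball (n : nat) (c : 'cV[R]_n) (rho : R) : set 'cV[R]_n :=
  [set x | enorm (x - c) <= rho]%classic.

(* p_1, ..., p_N are unit vectors whose open caps C(p_i, sqrt3/2) cover S^{n-1} *)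
Definition caps_cover (n N : nat) (p : nat -> 'cV[R]_n) : Prop :=
  (forall i, (1 <= i <= N)%N -> enorm (p i) = 1) /\
  (forall w : 'cV[R]_n, enorm w = 1 ->
     exists i, (1 <= i <= N)%N /\ Num.sqrt 3 / 2 < dot (p i) w).

(* p_1, ..., p_N generate a sqrt3/2-SVP: a covering with minimal N *)
Definition is_SVP (n N : nat) (p : nat -> 'cV[R]_n) : Prop :=
  caps_cover N p /\ (forall (M : nat) (q : nat -> 'cV[R]_n), caps_cover M q -> (N <= M)%N).

Definition max_alignment (n N : nat) (p : nat -> 'cV[R]_n) : R :=
  sup [set d : R | exists i j : nat,
         [/\ (1 <= i <= N)%N, (1 <= j <= N)%N, i <> j & d = dot (p i) (p j)]]%classic.

Definition Dconst (n N : nat) (A : 'M[R]_n) : R :=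
  sup [set opnorm (A ^+ k.+1 - 1%:M) | k in [set k : nat | (1 <= k <= N)%N]]%classic.

End Defs.

(* Write d = m - x0.  The control u_i cancels the drift of the trajectory:
   x_{i+1} = x0 + s_i p_i + (A^{i+1} - I)(x0 - c0) with
   s_i = r - ||A^{i+1} - I|| r0, and the last term has length at most
   ||A^{i+1} - I|| r0.  So it suffices to find i with |s_i p_i - d| <= s_i,
   which holds as soon as |d| <= 2 s_i c, c = <p_i, d/|d|>.  Choose the cap
   C(p_i, sqrt3/2) containing d/|d|; the hypothesis on r0 gives
   2 |d| <= 2 r <= s_i (3 - eta), and 3 - eta <= 4 c: either c = 1, or the
   plane of p_i and d contains a unit vector at cosine 4/5 from p_i, whose
   covering cap centre p_j has positive alignment with p_i, so eta > 0 and
   4 c > 2 sqrt3 > 3. *)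
From HB Require Import structures.
From mathcomp Require Import all_boot all_order all_algebra.
From mathcomp Require Import boolp classical_sets reals.
From mathcomp Require Import ring lra.
Import Order.TTheory GRing.Theory Num.Theory.
Set Implicit Arguments. Unset Strict Implicit. Unset Printing Implicit Defensive.
Local Open Scope ring_scope.

Section Euclidean.
Variables (R : realType) (n : nat).
Implicit Types (a b c : 'cV[R]_n) (M : 'M[R]_n).

Lemma dotC a b : dot a b = dot b a.
Proof. by apply: eq_bigr => i _; rewrite mulrC. Qed.

Lemma dotDl a b c : dot (a + b) c = dot a c + dot b c.
Proof. by rewrite /dot -big_split; apply: eq_bigr => i _; rewrite mxE mulrDl. Qed.

Lemma dotBl a b c : dot (a - b) c = dot a c - dot b c.
Proof. by rewrite /dot -sumrB; apply: eq_bigr => i _; rewrite !mxE mulrBl. Qed.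

Lemma dotZl k a c : dot (k *: a) c = k * dot a c.
Proof. by rewrite /dot mulr_sumr; apply: eq_bigr => i _; rewrite mxE mulrA. Qed.

Lemma dotNl a c : dot (- a) c = - dot a c.
Proof. by rewrite -scaleN1r dotZl mulN1r. Qed.

Lemma dotDr a b c : dot c (a + b) = dot c a + dot c b.
Proof. by rewrite dotC dotDl !(dotC c). Qed.

Lemma dotBr a b c : dot c (a - b) = dot c a - dot c b.
Proof. by rewrite dotC dotBl !(dotC c). Qed.

Lemma dotZr k a c : dot c (k *: a) = k * dot c a.
Proof. by rewrite dotC dotZl dotC. Qed.

Lemma dotNr a c : dot c (- a) = - dot c a.
Proof. by rewrite dotC dotNl dotC. Qed.

Lemma dot0l c : dot 0 c = 0.
Proof. by rewrite -(scale0r (0 : 'cV[R]_n)) dotZl mul0r. Qed.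

Lemma dotvv_ge0 a : 0 <= dot a a.
Proof. by apply: sumr_ge0 => i _; rewrite -expr2 sqr_ge0. Qed.

Lemma dotvv_eq0 a : dot a a = 0 -> a = 0.
Proof.
move=> aa0; apply/matrixP => i j; rewrite ord1 mxE.
have /psumr_eq0P a0 := aa0; have /eqP := a0 (fun k _ => sqr_ge0 (a k 0)) i isT.
by rewrite mulf_eq0 orbb => /eqP.
Qed.

Lemma enormE a : enorm a = Num.sqrt (dot a a).
Proof. by congr Num.sqrt; apply: eq_bigr => i _; rewrite expr2. Qed.

Lemma enorm_ge0 a : 0 <= enorm a.
Proof. by rewrite enormE sqrtr_ge0. Qed.

Lemma enorm_sqr a : enorm a ^+ 2 = dot a a.
Proof. by rewrite enormE sqr_sqrtr // dotvv_ge0. Qed.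

Lemma enorm_eq0 a : enorm a = 0 -> a = 0.
Proof. by move=> a0; apply: dotvv_eq0; rewrite -enorm_sqr a0 expr0n. Qed.

Lemma enorm0 : enorm (0 : 'cV[R]_n) = 0.
Proof. by rewrite enormE dot0l sqrtr0. Qed.

Lemma enormZ k a : enorm (k *: a) = `|k| * enorm a.
Proof.
by rewrite !enormE dotZl dotZr mulrA -expr2 sqrtrM ?sqr_ge0 // sqrtr_sqr.
Qed.

Lemma enormN a : enorm (- a) = enorm a.
Proof. by rewrite -scaleN1r enormZ normrN normr1 mul1r. Qed.

Lemma dot_sqr_le a b : dot a b ^+ 2 <= dot a a * dot b b.
Proof.
have [b0|b_neq0] := eqVneq b 0.
  by rewrite b0 !(dotC _ 0) !dot0l mulr0 expr0n.
have bb_gt0 : 0 < dot b b.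
  by rewrite lt_def dotvv_ge0 andbT; apply: contra_neq b_neq0; apply: dotvv_eq0.
have := dotvv_ge0 (dot b b *: a - dot a b *: b).
rewrite !(dotBl, dotBr, dotZl, dotZr) (dotC b a) => h.
rewrite -subr_ge0 -(pmulr_rge0 _ bb_gt0); move: h; congr (_ <= _); ring.
Qed.

Lemma cauchy_schwarz a b : dot a b <= enorm a * enorm b.
Proof.
rewrite !enormE -sqrtrM ?dotvv_ge0 // (le_trans (ler_norm _)) //.
by rewrite -sqrtr_sqr ler_sqrt ?dot_sqr_le // mulr_ge0 ?dotvv_ge0.
Qed.

Lemma enormD a b : enorm (a + b) <= enorm a + enorm b.
Proof.
rewrite -[leRHS]ger0_norm ?addr_ge0 ?enorm_ge0 // -sqrtr_sqr enormE.
rewrite ler_sqrt ?sqr_ge0 // !(dotDl, dotDr) sqrrD -!enorm_sqr (dotC b a).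
by have := cauchy_schwarz a b; lra.
Qed.

Lemma opnorm_has_ubound M :
  has_ubound [set enorm (M *m x) | x in [set x : 'cV[R]_n | enorm x <= 1]]%classic.
Proof.
(* the Frobenius norm bounds every row product by Cauchy-Schwarz *)
exists (Num.sqrt (\sum_(i < n) dot (row i M)^T (row i M)^T)).
move=> _ [x /= x_le1 <-]; rewrite enormE ler_sqrt; last first.
  by apply: sumr_ge0 => i _; apply: dotvv_ge0.
apply: ler_sum => i _.
have -> : (M *m x) i 0 = dot (row i M)^T x.
  by rewrite mxE; apply: eq_bigr => j _; rewrite !mxE.
rewrite -expr2 (le_trans (dot_sqr_le _ _)) // ler_piMr ?dotvv_ge0 //.
by rewrite -enorm_sqr expr_le1 ?enorm_ge0.
Qed.

Lemma opnorm_ge0 M : 0 <= opnorm M.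
Proof.
apply: (ub_le_sup (opnorm_has_ubound M)).
by exists 0; rewrite /= ?mulmx0 enorm0 ?ler01.
Qed.

Lemma enorm_mulmx_le M a : enorm (M *m a) <= opnorm M * enorm a.
Proof.
have [a0|a_neq0] := eqVneq (enorm a) 0.
  by rewrite (enorm_eq0 a0) mulmx0 enorm0 mulr0.
have a_gt0 : 0 < enorm a by rewrite lt_def a_neq0 enorm_ge0.
have : enorm (M *m ((enorm a)^-1 *: a)) <= opnorm M.
  apply: (ub_le_sup (opnorm_has_ubound M)); exists ((enorm a)^-1 *: a) => //=.
  by rewrite enormZ ger0_norm ?invr_ge0 ?enorm_ge0 // mulVf.
rewrite -scalemxAr enormZ ger0_norm ?invr_ge0 ?enorm_ge0 //.
by rewrite mulrC -ler_pdivlMr ?invr_gt0 // invrK.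
Qed.

Lemma enorm_scale_sub_le (q w : 'cV[R]_n) (s nu : R) :
  enorm q = 1 -> enorm w = 1 -> 0 <= s -> 0 <= nu <= 2 * s * dot q w ->
  enorm (s *: q - nu *: w) <= s.
Proof.
move=> q1 w1 s_ge0 /andP[nu_ge0 nu_le].
rewrite -[leRHS]ger0_norm // -sqrtr_sqr enormE ler_sqrt ?sqr_ge0 //.
rewrite !(dotBl, dotBr, dotZl, dotZr) (dotC w q) -!enorm_sqr q1 w1; nra.
Qed.

Lemma exists_orthogonal_unit (p w : 'cV[R]_n) :
  enorm p = 1 -> enorm w = 1 -> dot p w ^+ 2 < 1 ->
  exists q : 'cV[R]_n, enorm q = 1 /\ dot p q = 0.
Proof.
move=> p1 w1 c_lt1; set c := dot p w in c_lt1.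
have pp : dot p p = 1 by rewrite -enorm_sqr p1 expr1n.
set y := w - c *: p.
have y_sqr : enorm y ^+ 2 = 1 - c ^+ 2.
  rewrite enorm_sqr !(dotBl, dotBr, dotZl, dotZr) (dotC w p) pp -enorm_sqr w1.
  by rewrite -/c; ring.
have y_gt0 : 0 < enorm y.
  rewrite lt_def enorm_ge0 andbT; apply/eqP => y0.
  by move: y_sqr; rewrite y0 expr0n => /eqP; rewrite eq_sym subr_eq0 gt_eqF.
exists ((enorm y)^-1 *: y); split.
  by rewrite enormZ ger0_norm ?invr_ge0 ?enorm_ge0 // mulVf ?gt_eqF.
by rewrite dotZr /y dotBr dotZr pp mulr1 subrr mulr0.
Qed.

End Euclidean.

Lemma sqrt3_gt (R : realType) : 8 / 5 < Num.sqrt 3 :> R.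
Proof.
have sqrt3_ge0 : 0 <= Num.sqrt 3 :> R := sqrtr_ge0 _.
have : Num.sqrt 3 ^+ 2 = 3 :> R by rewrite sqr_sqrtr.
by rewrite expr2; nra.
Qed.

Section Alignment.
Variables (R : realType) (n N : nat) (p : nat -> 'cV[R]_n).
Hypothesis p_unit : forall i, (1 <= i <= N)%N -> enorm (p i) = 1.

Let alignments := [set d : R | exists i j : nat,
  [/\ (1 <= i <= N)%N, (1 <= j <= N)%N, i <> j & d = dot (p i) (p j)]]%classic.

Lemma alignments_le1 : ubound alignments 1.
Proof.
move=> _ [i [j [hi hj _ ->]]].
by have := cauchy_schwarz (p i) (p j); rewrite !p_unit // mulr1.
Qed.

Lemma max_alignment_ge i j : (1 <= i <= N)%N -> (1 <= j <= N)%N -> i <> j ->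
  dot (p i) (p j) <= max_alignment N p.
Proof.
by move=> hi hj ij; apply: ub_le_sup; [exists 1; apply: alignments_le1 | exists i, j].
Qed.

(* For [N <= 1] there are no pairs, and [sup set0 = 0]. *)
Lemma max_alignment_eq0 : ~ (alignments !=set0)%classic -> max_alignment N p = 0.
Proof.
move=> empty; change (sup alignments = 0).
suff -> : alignments = set0%classic by exact: sup0.
by apply/eqP/negPn/negP => /set0P.
Qed.

Lemma max_alignment_le1 : max_alignment N p <= 1.
Proof.
have [nonempty|empty] := pselect (alignments !=set0)%classic.
  exact: ge_sup nonempty alignments_le1.
by rewrite max_alignment_eq0 ?ler01.
Qed.

Lemma max_alignment_geN1 : -1 <= max_alignment N p.
Proof.
have [[_ [i [j [hi hj ij _]]]]|empty] := pselect (alignments !=set0)%classic.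
  apply: le_trans (max_alignment_ge hi hj ij).
  by have := cauchy_schwarz (p i) (- p j); rewrite enormN !p_unit // mulr1 dotNr lerNl.
by rewrite max_alignment_eq0 ?lerN10.
Qed.

Lemma cover_neighbour i (q : 'cV[R]_n) : caps_cover N p -> (1 <= i <= N)%N ->
  enorm q = 1 -> dot (p i) q = 0 ->
  exists j, [/\ (1 <= j <= N)%N, j <> i & 0 < dot (p i) (p j)].
Proof.
move=> [_ cover] hi q1 pq0.
have pp : dot (p i) (p i) = 1 by rewrite -enorm_sqr p_unit // expr1n.
have qq : dot q q = 1 by rewrite -enorm_sqr q1 expr1n.
(* a unit vector at cosine 4/5 < sqrt3/2 from p_i, hence outside its cap *)
have [z [zz pz]] : exists z : 'cV[R]_n, dot z z = 1 /\ dot (p i) z = 4 / 5.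
  exists ((4 / 5 : R) *: p i + (3 / 5 : R) *: q); rewrite !(dotDl, dotDr, dotZl, dotZr).
  by rewrite (dotC q (p i)) pq0 pp qq; split; field.
have z1 : enorm z = 1 by rewrite enormE zz sqrtr1.
have [j [hj pj_z]] := cover z z1.
have sqrt3 := sqrt3_gt R.
exists j; split=> //; first by move=> ji; move: pj_z; rewrite ji pz; lra.
have pjpj : dot (p j) (p j) = 1 by rewrite -enorm_sqr p_unit // expr1n.
have := dotvv_ge0 (p i + (p j - z)).
rewrite !(dotDl, dotDr, dotNl, dotNr) opprK zz (dotC z (p i)) (dotC z (p j)).
by rewrite (dotC (p j) (p i)) pp pjpj pz; lra.
Qed.

Lemma cap_alignment i (w : 'cV[R]_n) : caps_cover N p -> (1 <= i <= N)%N ->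
  enorm w = 1 -> Num.sqrt 3 / 2 < dot (p i) w ->
  3 - max_alignment N p <= 4 * dot (p i) w.
Proof.
move=> cover hi w1 p_w; have sqrt3 := sqrt3_gt R.
have := max_alignment_geN1; have [c_ge1|c_lt1] := lerP 1 (dot (p i) w); first lra.
have [q [q1 pq0]] : exists q : 'cV[R]_n, enorm q = 1 /\ dot (p i) q = 0.
  by apply: (exists_orthogonal_unit (p_unit hi) w1); rewrite expr_lt1 //; lra.
have [j [hj ji pij_gt0]] := cover_neighbour cover hi q1 pq0.
by have := max_alignment_ge hi hj (nesym ji); lra.
Qed.

Lemma exists_cap_shift (d : 'cV[R]_n) (s : nat -> R) : caps_cover N p -> (0 < N)%N ->
  (forall i, (1 <= i <= N)%N -> 2 * enorm d <= s i * (3 - max_alignment N p)) ->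
  exists2 i, (1 <= i <= N)%N & enorm (s i *: p i - d) <= s i.
Proof.
move=> cover N_gt0 gain.
have s_ge0 i : (1 <= i <= N)%N -> 0 <= s i.
  by move=> hi; have := gain i hi; have := max_alignment_le1; have := enorm_ge0 d; nra.
have [d0|d_neq0] := eqVneq (enorm d) 0.
  have h1 : (1 <= 1 <= N)%N by rewrite leqnn N_gt0.
  exists 1%N => //.
  by rewrite (enorm_eq0 d0) subr0 enormZ p_unit // mulr1 ger0_norm ?s_ge0.
have d_gt0 : 0 < enorm d by rewrite lt_def d_neq0 enorm_ge0.
pose w := (enorm d)^-1 *: d.
have w1 : enorm w = 1 by rewrite enormZ ger0_norm ?invr_ge0 ?enorm_ge0 // mulVf.
have [i [hi cap]] := cover.2 w w1.
exists i => //.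
have -> : d = enorm d *: w by rewrite scalerA mulfV // scale1r.
apply: enorm_scale_sub_le; rewrite ?p_unit ?s_ge0 ?enorm_ge0 //=.
have := ler_wpM2l (s_ge0 i hi) (cap_alignment cover hi w1 cap).
by have := gain i hi; lra.
Qed.

End Alignment.

Lemma Dconst_ge (R : realType) n N (A : 'M[R]_n) k : (1 <= k <= N)%N ->
  opnorm (A ^+ k.+1 - 1%:M) <= Dconst N A.
Proof.
move=> hk; apply: ub_le_sup; last by exists k.
exists (\sum_(l < N.+1) `|opnorm (A ^+ l.+1 - 1%:M)|) => _ [l /andP[_ hl] <-].
rewrite (bigD1 (Ordinal (hl : (l < N.+1)%N))) //= (le_trans (ler_norm _)) // lerDl.
exact: sumr_ge0.
Qed.

Lemma Dconst0 (R : realType) n (A : 'M[R]_n) : Dconst 0 A = 0.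
Proof.
rewrite /Dconst; set S := (X in sup X).
suff -> : S = set0%classic by rewrite sup0.
by apply/seteqP; split=> // _ [k /= hk _]; case: k hk.
Qed.

Lemma controlled_state (R : realType) n (A : 'M[R]_n) (c q : 'cV[R]_n)
    (u x : nat -> 'cV[R]_n) i :
  (forall k, x k.+1 = A *m x k + u k) ->
  u i = q - (A ^+ i.+1 - 1%:M) *m c - \sum_(j < i) A ^+ (i - j) *m u j ->
  x i.+1 = x 0%N + q + (A ^+ i.+1 - 1%:M) *m (x 0%N - c).
Proof.
move=> hx ui.
have trajectory k : x k.+1 = A ^+ k.+1 *m x 0%N + \sum_(j < k.+1) A ^+ (k - j) *m u j.
  elim: k => [|k IH]; first by rewrite hx big_ord1 expr1 expr0 mul1mx.
  rewrite hx IH mulmxDr mulmxA mulmxE -exprS mulmx_sumr [in RHS]big_ord_recr /=.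
  rewrite subnn expr0 mul1mx addrA; congr (_ + _ + _); apply: eq_bigr => j _.
  by rewrite mulmxA mulmxE -exprS subSn // -ltnS.
rewrite trajectory big_ord_recr /= subnn expr0 mul1mx ui.
set S := \sum_(j < i) _.
rewrite mulmxBr !mulmxBl !mul1mx [S + _]addrC subrK [RHS]addrC -!addrA; congr (_ + _).
by rewrite addrCA addKr addrC.
Qed.

Lemma control_gain (R : realFieldType) (r r0 eta D a : R) :
  0 <= r -> 0 < r0 -> eta <= 1 -> a <= D ->
  r0 <= r * (1 - eta) / (D * (3 - eta)) -> 2 * r <= (r - a * r0) * (3 - eta).
Proof.
move=> r_ge0 r0_gt0 eta_le1 aD r0_le.
have eta3 : 0 < 3 - eta by lra.
have D_gt0 : 0 < D.
  rewrite ltNge; apply/negP => D_le0; move: r0_le; apply/negP; rewrite -ltNge.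
  apply: le_lt_trans _ r0_gt0; apply: mulr_ge0_le0; first by rewrite mulr_ge0 ?subr_ge0.
  by rewrite invr_le0 pmulr_lle0.
move: r0_le; rewrite ler_pdivlMr ?mulr_gt0 //.
have : a * r0 * (3 - eta) <= D * r0 * (3 - eta) by rewrite !ler_pM2r.
by nra.
Qed.

Theorem lemma5p2 (R : realType) (n N : nat) (A : 'M[R]_n)
  (m c0 x0 : 'cV[R]_n) (r r0 : R) (p : nat -> 'cV[R]_n)
  (u x : nat -> 'cV[R]_n) :
  0 < r -> 0 < r0 ->
  is_SVP N p ->
  r0 <= r * (1 - max_alignment N p) / (Dconst N A * (3 - max_alignment N p)) ->
  cball m r x0 -> cball c0 r0 x0 ->
  (forall i, (1 <= i <= N)%N ->
     u i = (r - opnorm (A ^+ i.+1 - 1%:M) * r0) *: p i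
           - (A ^+ i.+1 - 1%:M) *m c0
           - \sum_(j < i) (A ^+ (i - j) *m u j)) ->
  x 0%N = x0 ->
  (forall k, x k.+1 = A *m x k + u k) ->
  exists i, (1 <= i <= N)%N /\ cball m r (x i.+1).
Proof.
move=> r_gt0 r0_gt0 [cover _] r0_le x0_m x0_c0 hu hx0 hx.
have N_gt0 : (0 < N)%N.
  rewrite lt0n; apply/eqP => N0; move: r0_le.
  by rewrite N0 Dconst0 mul0r invr0 mulr0 leNgt r0_gt0.
pose s i := r - opnorm (A ^+ i.+1 - 1%:M) * r0.
have [i hi shift] : exists2 i, (1 <= i <= N)%N & enorm (s i *: p i - (m - x0)) <= s i.
  apply: (exists_cap_shift (s := s) cover.1 cover N_gt0) => i hi.
  apply: le_trans (control_gain (ltW r_gt0) r0_gt0 (max_alignment_le1 cover.1)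
                                (Dconst_ge A hi) r0_le).
  by rewrite ler_pM2l // -opprB enormN.
exists i; split => //; rewrite /cball /= (controlled_state hx (hu i hi)) hx0.
rewrite addrAC (addrC x0) -[s i *: p i + x0 - m]addrA.
rewrite opprB in shift.
apply: le_trans (enormD _ _) (le_trans (lerD shift (enorm_mulmx_le _ _)) _).
have := ler_wpM2l (opnorm_ge0 (A ^+ i.+1 - 1%:M)) x0_c0.
by rewrite /s; lra.
Qed.
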